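(* Let $q:\mathsf D\to\mathbb R$ have sensitivity $\Delta q\in(0,\infty)$, and let $\Lambda$ be a random variable with support in $(0,\infty)$, $\mathbb E[\Lambda]<\infty$, MGF $M_\Lambda$, and $M_\Lambda(\Delta q)<\infty$. Let $\epsilon_R=\ln[\mathbb E(\Lambda)/M'_\Lambda(-\Delta q)]$ be the privacy level of the Randomized DP Laplace mechanism with reciprocal scale $\Lambda$. If $\epsilon_R\ge \ln \mathbb E\big[e^{\Delta q\,\Lambda}\big]=\ln M_\Lambda(\Delta q)$, then for every $\gamma>0$ the usefulness of this mechanism is at most that of the baseline Laplace mechanism with the same privacy level, i.e. $$\mathbb P(|\mathcal M_q(d)-q(d)|\le\gamma)\le 1-e^{-\epsilon_R\gamma/\Delta q}.$$ Equivalently, a necessary condition for the Randomized DP Laplace mechanism to have strictly larger usefulness than the $\epsilon_R$-DP baseline Laplace mechanism for some $\gamma>0$ is $$e^{\epsilon_R}=\frac{\mathbb E(\Lambda)}{M'_\Lambda(-\Delta q)}<M_\Lambda(\Delta q).$$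
   Context: Databases form a set $\mathsf D$ with a symmetric adjacency relation; the sensitivity of $q$ is $\Delta q=\sup\{|q(d)-q(d')|:d,d'\text{ adjacent}\}$. The baseline $\epsilon$-DP Laplace mechanism outputs $q(d)+Z$ with $Z$ Laplace of mean $0$ and scale $\Delta q/\epsilon$, so its usefulness at level $\gamma$ is $\mathbb P(|Z|\le\gamma)=1-e^{-\epsilon\gamma/\Delta q}$. The Randomized DP Laplace mechanism with reciprocal-scale distribution $\Lambda$ (a random variable with values in $(0,\infty)$, playing the role of $1/b$ for the Laplace scale $b$) is defined by $\mathcal M_q(d)=q(d)+W$, where conditionally on $\Lambda=\lambda$ the noise $W$ is Laplace with mean $0$ and scale $1/\lambda$, i.e. has density $\frac{\lambda}{2}e^{-\lambda|w|}$; the pair $(\Lambda,W)$ is drawn independently of $d$. $M_\Lambda(t)=\mathbb E[e^{t\Lambda}]$ and $M'_\Lambda(t)=\mathbb E[\Lambda e^{t\Lambda}]$. *)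

From mathcomp Require Import all_boot all_order all_algebra.
From mathcomp Require Import all_classical all_reals all_analysis.
Set Implicit Arguments. Unset Strict Implicit. Unset Printing Implicit Defensive.
Import Order.TTheory GRing.Theory Num.Theory.
Import numFieldNormedType.Exports.
Local Open Scope classical_set_scope.
Local Open Scope ring_scope.
Local Open Scope ereal_scope.

Definition sensitivity (D : Type) (R : realType) (adj : D -> D -> Prop)
  (q : D -> R) : \bar R :=
  ereal_sup [set x : \bar R | exists d d', adj d d' /\ x = (`|q d - q d'|)%:E].

Definition laplace_density (R : realType) (lam w : R) : R :=
  (lam / 2 * expR (- lam * `|w|))%R.

(* Law of the noise W of the Randomized Laplace mechanism: the mixture over
   lam ~ PL of Laplace(0, 1/lam), evaluated at a set A. *)
Definition rand_laplace_noise_law (R : realType) (PL : probability R R)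
  (A : set R) : \bar R :=
  \int[PL]_lam (\int[@lebesgue_measure R]_(w in A) (laplace_density lam w)%:E).

Definition mean_L (R : realType) (PL : probability R R) : R :=
  fine (\int[PL]_lam lam%:E).
Definition mgf_L (R : realType) (PL : probability R R) (t : R) : R :=
  fine (\int[PL]_lam (expR (t * lam))%:E).
(* M'_Lambda(t) = E[Lambda exp(t Lambda)] *)
Definition mgf'_L (R : realType) (PL : probability R R) (t : R) : R :=
  fine (\int[PL]_lam (lam * expR (t * lam))%:E).

Definition eps_R (R : realType) (PL : probability R R) (dq : R) : R :=
  ln (mean_L PL / mgf'_L PL (- dq)).

From mathcomp Require Import all_boot all_order all_algebra.
From mathcomp Require Import all_classical all_reals all_analysis.
From mathcomp Require Import measurable_realfun ring lra.
Import Order.TTheory GRing.Theory Num.Theory.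
Import numFieldNormedType.Exports.
Local Open Scope classical_set_scope.
Local Open Scope ring_scope.

(* Conditionally on Lambda = lam, the noise lies in [-g, g] with probability
   1 - exp(-lam g), so the usefulness of the randomized mechanism is
   1 - E[exp(-g Lambda)] <= 1 - exp(-g E[Lambda]) by Jensen's inequality.
   Jensen applied once more gives exp(dq E[Lambda]) <= M(dq) <= exp(eps_R),
   i.e. E[Lambda] <= eps_R / dq, and the bound follows by monotonicity. *)

Local Notation mu := (@lebesgue_measure _).

Section scaled_expR.
Context {R : realType}.

Lemma is_derive_scaled_expR (c k w : R) :
  is_derive w 1 (fun w => c * expR (k * w)) (c * (expR (k * w) * k)).
Proof.
have dk : is_derive w 1 (fun w : R => k * w) k.
  have := @is_deriveZ R R R (@id R) k w 1 1 (is_derive_id _ _).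
  by rewrite /GRing.scale /= mulr1.
have dexp : is_derive w 1 (expR \o (fun w : R => k * w)) (expR (k * w) * k).
  exact: is_derive1_comp. (* uses [dk] through instance resolution *)
exact: (@is_deriveZ R R R _ c w 1 _ dexp).
Qed.

Lemma continuous_scaled_expR (c k : R) :
  continuous (fun w : R => c * expR (k * w)).
Proof.
move=> z; apply: differentiable_continuous; apply/derivable1_diffP.
by have [] := is_derive_scaled_expR c k z.
Qed.

Lemma continuous_expRM (k : R) : continuous (fun w : R => expR (k * w)).
Proof.
have := continuous_scaled_expR 1 k.
by under [X in continuous X -> _]eq_fun => w do rewrite mul1r.
Qed.

End scaled_expR.

Section laplace_density.
Variables (R : realType) (lam : R).

Lemma continuous_laplace_density : continuous (laplace_density lam).
Proof.
have -> : laplace_density lam =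
    (fun u => lam / 2 * expR (- lam * u)) \o (fun w : R => `|w|).
  by apply: funext => w.
move=> z; apply: continuous_comp; first exact: norm_continuous.
exact: continuous_scaled_expR.
Qed.

Lemma measurable_laplace_density (D : set R) :
  measurable_fun D (laplace_density lam).
Proof.
apply: measurable_funTS; apply: continuous_measurable_fun.
exact: continuous_laplace_density.
Qed.

Lemma integral_laplace_density_0g (g : R) : 0 < g ->
  (\int[mu]_(x in `[0%R, g]) (laplace_density lam x)%:E =
   ((1 - expR (- lam * g)) / 2)%:E)%E.
Proof.
move=> g0.
rewrite (@continuous_FTC2 R (laplace_density lam)
   (fun w => (- 1/2) * expR (- lam * w)) 0 g g0) //.
- by rewrite -EFinB mulr0 expR0; congr (_%:E); field.
- by apply/continuous_subspaceT => ?; exact: continuous_laplace_density.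
- split.
  + by move=> z _; have [] := is_derive_scaled_expR (-1/2) (- lam) z.
  + by apply: cvg_at_right_filter; exact: continuous_scaled_expR.
  + by apply: cvg_at_left_filter; exact: continuous_scaled_expR.
- move=> z; rewrite in_itv/= => /andP[z0 _].
  rewrite derive1E (@derive_val _ _ _ _ _ _ _ (is_derive_scaled_expR (-1/2) (-lam) z)).
  by rewrite /laplace_density ger0_norm ?ltW//; field.
Qed.

Lemma integral_laplace_density_Ng0 (g : R) : 0 < g ->
  (\int[mu]_(x in `[(- g)%R, 0%R]) (laplace_density lam x)%:E =
   ((1 - expR (- lam * g)) / 2)%:E)%E.
Proof.
move=> g0.
have Ng0 : - g < 0 by rewrite oppr_lt0.
rewrite (@continuous_FTC2 R (laplace_density lam)
   (fun w => (1/2) * expR (lam * w)) (- g) 0 Ng0) //.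
- by rewrite -EFinB mulr0 expR0 mulNr mulrN; congr (_%:E); field.
- by apply/continuous_subspaceT => ?; exact: continuous_laplace_density.
- split.
  + by move=> z _; have [] := is_derive_scaled_expR (1/2) lam z.
  + by apply: cvg_at_right_filter; exact: continuous_scaled_expR.
  + by apply: cvg_at_left_filter; exact: continuous_scaled_expR.
- move=> z; rewrite in_itv/= => /andP[_ z0].
  rewrite derive1E (@derive_val _ _ _ _ _ _ _ (is_derive_scaled_expR (1/2) lam z)).
  by rewrite /laplace_density ltr0_norm// mulrN mulNr opprK; field.
Qed.

Lemma integral_laplace_density_norm_le (g : R) : 0 < g ->
  (\int[mu]_(w in [set w : R | (`|w| <= g)%R]) (laplace_density lam w)%:E =
   (1 - expR (- lam * g))%:E)%E.
Proof.
move=> g0.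
have -> : [set w : R | `|w| <= g] = `[(- g)%R, 0%R] `|` `]0%R, g].
  apply/seteqP; split => w /=; rewrite !in_itv/=.
  - move=> wg; have [w0|w0] := leP w 0.
    + by left; rewrite andbT -lerNl -ler0_norm.
    + by right; rewrite -(gtr0_norm w0).
  - case=> [/andP[gw w0]|/andP[w0 wg]].
    + by rewrite ler0_norm// lerNl.
    + by rewrite gtr0_norm.
rewrite integral_setU //; last 2 first.
- by apply/measurable_EFinP; exact: measurable_laplace_density.
- apply/disj_setPS => w [] /=; rewrite !in_itv/= => /andP[_ w0] /andP[w0' _].
  by move: (lt_le_trans w0' w0); rewrite ltxx.
rewrite integral_itv_obnd_cbnd; last by apply/measurable_EFinP; exact: measurable_laplace_density.
rewrite integral_laplace_density_Ng0// integral_laplace_density_0g// -EFinD.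
by congr (_%:E); field.
Qed.

End laplace_density.

Section probability_full_set.
Context d (T : measurableType d) (R : realType) (P : probability T R).
Variable S : set T.
Hypotheses (mS : measurable S) (PS : P S = 1%E).

Lemma integral_prob1_set (f : T -> \bar R) : measurable_fun setT f ->
  (\int[P]_x f x = \int[P]_(x in S) f x)%E.
Proof.
move=> mf.
have PnS : P (~` S) = 0%E by rewrite probability_setC// PS subee.
rewrite -(setUv S) integral_setU //; last 3 first.
- exact: measurableC.
- by rewrite setUv.
- exact/disj_setPCl.
rewrite (@null_set_integral _ _ _ P (~` S)) ?adde0//.
- exact: measurableC.
- exact: measurable_funTS.
Qed.

(* exp(c x) lies above its tangent at the mean; integrate. *)
Lemma jensen_expR (X : T -> R) (c : R) :
  P.-integrable S (EFin \o X) ->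
  P.-integrable S (EFin \o (fun x => expR (c * X x))) ->
  expR (c * Rintegral P S X) <= Rintegral P S (fun x => expR (c * X x)).
Proof.
move=> iX iE.
set m := Rintegral P S X; set e := expR (c * m).
have tangent x : S x -> e * (1 - c * m) + (e * c) * X x <= expR (c * X x).
  move=> _; have -> : expR (c * X x) = e * expR (c * X x - c * m).
    by rewrite /e -expRD addrC subrK.
  apply: le_trans (ler_wpM2l (expR_ge0 (c * m)) (expR_ge1Dx _)).
  by rewrite -/e; lra.
have iC : P.-integrable S (EFin \o (fun=> e * (1 - c * m))).
  exact: finite_measure_integrable_cst.
have iZ : P.-integrable S (EFin \o (fun x => (e * c) * X x)).
  by have := integrableZl mS (e * c) iX.
apply: le_trans (le_Rintegral mS (integrableD mS iC iZ) iE tangent).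
rewrite (RintegralD mS iC iZ) Rintegral_cst// (RintegralZl _ mS iX) -/m.
have -> : fine (P S) = 1 by rewrite PS.
lra.
Qed.

End probability_full_set.

Section positive_reciprocal_scale.
Context {R : realType} {PL : probability R R}.
Let pos : set R := `]0%R, +oo[.
Hypothesis PL_pos : PL pos = 1%E.

Let mpos : measurable pos. Proof. exact: measurable_itv. Qed.

Let integrable_pos (f : R -> R) :
  PL.-integrable setT (EFin \o f) -> PL.-integrable pos (EFin \o f).
Proof. exact: integrableS. Qed.

Let integral_pos {f : R -> R} : continuous f ->
  (\int[PL]_x (f x)%:E = \int[PL]_(x in pos) (f x)%:E)%E.
Proof.
move=> cf; apply: integral_prob1_set => //.
by apply/measurable_EFinP; exact: continuous_measurable_fun.
Qed.

Lemma integrable_expR_Nmul (g : R) : 0 <= g ->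
  PL.-integrable pos (EFin \o (fun x => expR (- g * x))).
Proof.
move=> g0; apply: (le_integrable mpos _ _ (finite_measure_integrable_cst _ 1 mpos)).
  apply/measurable_EFinP; apply: measurable_funTS.
  exact: continuous_measurable_fun (continuous_expRM _).
move=> x; rewrite /pos /= in_itv /= andbT => x0.
rewrite !lee_fin ger0_norm ?expR_ge0// normr1 expR_le1.
by rewrite mulNr oppr_le0 mulr_ge0// ltW.
Qed.

Lemma mean_L_pos : mean_L PL = Rintegral PL pos id.
Proof. by rewrite /mean_L (@integral_pos id)// => x; exact: cvg_id. Qed.

Lemma mgf_L_pos (t : R) : mgf_L PL t = Rintegral PL pos (fun x => expR (t * x)).
Proof. by rewrite /mgf_L (integral_pos (continuous_expRM t)). Qed.

Lemma expR_mean_le_mgf (t : R) :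
  PL.-integrable setT (EFin \o id) ->
  PL.-integrable setT (EFin \o (fun x => expR (t * x))) ->
  expR (t * mean_L PL) <= mgf_L PL t.
Proof.
move=> iL iE; rewrite mean_L_pos mgf_L_pos.
by apply: jensen_expR => //; exact: integrable_pos.
Qed.

Lemma rand_laplace_noise_law_norm_le (g : R) : 0 < g ->
  rand_laplace_noise_law PL [set w : R | `|w| <= g] =
  (1 - Rintegral PL pos (fun x => expR (- g * x)))%:E.
Proof.
move=> g0; rewrite /rand_laplace_noise_law.
under eq_integral => lam _ do rewrite integral_laplace_density_norm_le//.
have c1 : continuous (fun lam : R => 1 - expR (- lam * g)).
  have -> : (fun lam : R => 1 - expR (- lam * g)) =
      cst 1 - (fun lam => expR (- g * lam)).
    by apply/funext => lam; rewrite /= mulNr mulrC -mulNr.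
  move=> x; apply: continuousB; [exact: cst_continuous | exact: continuous_expRM].
rewrite (integral_pos c1).
under eq_integral => lam _ do rewrite EFinB mulNr mulrC -mulNr.
have i1 : PL.-integrable pos (EFin \o cst 1) by exact: finite_measure_integrable_cst.
have iG := @integrable_expR_Nmul g (ltW g0).
rewrite (integralB_EFin mpos i1 iG).
have -> : (\int[PL]_(x in pos) (1 : R)%:E = 1)%E by rewrite integral_cst// mul1e.
by rewrite -(fineK (integrable_fin_num mpos iG)) -EFinB.
Qed.

Lemma rand_laplace_usefulness_le {g : R} : 0 < g ->
  PL.-integrable setT (EFin \o id) ->
  (rand_laplace_noise_law PL [set w : R | (`|w| <= g)%R] <=
   (1 - expR (- g * mean_L PL))%:E)%E.
Proof.
move=> g0 iL; rewrite rand_laplace_noise_law_norm_le// lee_fin lerD2l lerN2.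
rewrite mean_L_pos; apply: jensen_expR => //; first exact: integrable_pos.
exact: @integrable_expR_Nmul g (ltW g0).
Qed.

End positive_reciprocal_scale.

Theorem mainTheorem6 (R : realType) (D : Type) (adj : D -> D -> Prop)
  (q : D -> R) (dq : R) (PL : probability R R) :
  (forall d d', adj d d' -> adj d' d) ->
  sensitivity adj q = dq%:E -> 0 < dq ->
  PL `]0%R, +oo[%classic = 1%E ->
  PL.-integrable setT (fun lam => lam%:E) ->
  PL.-integrable setT (fun lam => (expR (dq * lam))%:E) ->
  ln (mgf_L PL dq) <= eps_R PL dq ->
  forall (gamma : R), 0 < gamma ->
  forall d : D,
  (rand_laplace_noise_law PL [set w : R | (`|(q d + w) - q d| <= gamma)%R]
    <= (1 - expR (- eps_R PL dq * gamma / dq))%:E)%E.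
Proof.
move=> _ _ dq0 PL_pos iL iE mgf_le_eps gamma gamma0 d.
have mgf_gt0 : 0 < mgf_L PL dq.
  exact: lt_le_trans (expR_gt0 _) (expR_mean_le_mgf PL_pos dq iL iE).
have mean_le : mean_L PL <= eps_R PL dq / dq.
  rewrite ler_pdivlMr// mulrC; apply: le_trans mgf_le_eps.
  by rewrite -ler_expR lnK ?posrE//; exact: expR_mean_le_mgf.
have -> : [set w : R | `|q d + w - q d| <= gamma] = [set w : R | `|w| <= gamma].
  by apply/seteqP; split => w /=; rewrite addrAC subrr add0r.
apply: (le_trans (rand_laplace_usefulness_le PL_pos gamma0 iL)).
rewrite lee_fin lerD2l lerN2 ler_expR.
have -> : - eps_R PL dq * gamma / dq = - gamma * (eps_R PL dq / dq) by ring.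
by rewrite !mulNr lerN2 ler_wpM2l// ltW.
Qed.
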